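(* Let $\beta\in(1/2,1)$ and $r>0$, and suppose the standing assumptions below hold (each $G_{n,i}$ has a continuous density $f_{n,i}$ on $(0,1)$ with $\sup_x f_{n,i}(x)\le C$ for a constant $C<\infty$ independent of $n,i$, and the tail condition (T) holds). Suppose that $r<\rho(\beta)$, i.e. \[ \max_{q\in(0,1]}\Big(\tfrac{1+q}{2}-\alpha(q,r)-\beta\Big)<0 . \] Then the Higher Criticism test is asymptotically powerless for testing $H_0$ against $H_1^{(n)}$: for every real sequence $(h(n))_{n\ge1}$, \[ \Pr_{H_0}\big(\mathrm{HC}_n^\star>h(n)\big)+\Pr_{H_1^{(n)}}\big(\mathrm{HC}_n^\star\le h(n)\big)\to 1\quad (n\to\infty). \]
   Context: Hypotheses. For each $n$, $\pi_1,\dots,\pi_n$ are P-values. Under $H_0$: $\pi_i$ i.i.d. $\mathrm{Unif}(0,1)$. Under $H_1^{(n)}$: $\pi_1,\dots,\pi_n$ are independent with $\pi_i\sim(1-\epsilon_n)\mathrm{Unif}(0,1)+\epsilon_n G_{n,i}$, where $\epsilon_n=n^{-\beta}$ and $G_{n,i}$ is a probability distribution on $(0,1)$ stochastically smaller than $\mathrm{Unif}(0,1)$ (i.e. $G_{n,i}(t)\ge t$ for $t\in(0,1)$). Tail condition (T): $\alpha:[0,1]\times(0,\infty)\to[0,\infty)$ is continuous, nondecreasing in $q$ and nonincreasing in $r$, and there is a sequence $\delta_n\to0$ such that for all $n$, all $1\le i\le n$ and all $q\in(0,1]$, with $X\sim G_{n,i}$, \[ \Big|\,-\log\Pr(X<n^{-q})-\alpha(q,r)\log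 n\,\Big|\le \delta_n\log n . \] The function $\rho$ is $\rho(\beta)=\sup\{r>0:\max_{q\in(0,1]}(\frac{1+q}{2}-\alpha(q,r)-\beta)<0\}$. Higher Criticism: with $\pi_{(1)}\le\dots\le\pi_{(n)}$ the order statistics and a fixed tuning constant $\gamma_0\in(0,1)$, \[ \mathrm{HC}_n^\star=\max_{1\le i\le \gamma_0 n}\sqrt n\,\frac{i/n-\pi_{(i)}}{\sqrt{\pi_{(i)}(1-\pi_{(i)})}} . \] *)

From HB Require Import structures.
From mathcomp Require Import all_boot all_order all_algebra.
From mathcomp Require Import all_classical all_reals all_analysis.
Set Implicit Arguments. Unset Strict Implicit. Unset Printing Implicit Defensive.
Import Order.TTheory GRing.Theory Num.Theory.
Import numFieldNormedType.Exports.
Local Open Scope classical_set_scope.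
Local Open Scope ring_scope.

(* Mutual independence of a finite family of real random variables:
   product rule for every family of Borel sets (taking B i = setT
   recovers every subfamily). *)
Definition mutually_independent {d} {T : measurableType d} {R : realType}
  (P : probability T R) (n : nat) (X : 'I_n -> T -> R) : Prop :=
  forall B : 'I_n -> set R, (forall i, measurable (B i)) ->
    P (\bigcap_(i in [set: 'I_n]) (X i @^-1` B i)) =
    (\prod_(i < n) P (X i @^-1` B i))%E.

Definition uniform01_law {d} {T : measurableType d} {R : realType}
  (P : probability T R) (X : T -> R) : Prop :=
  forall B : set R, measurable B ->
    P (X @^-1` B) = (@lebesgue_measure R) (B `&` `]0, 1[).

Definition dens_meas {R : realType} (f : R -> R) (B : set R) : \bar R :=
  (\int[@lebesgue_measure R]_(x in B `&` `]0%R, 1%R[) (f x)%:E)%E.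

Definition dens_cdf {R : realType} (f : R -> R) (t : R) : R :=
  fine (dens_meas f `]-oo, t[).

Definition mixture_law {d} {T : measurableType d} {R : realType}
  (P : probability T R) (X : T -> R) (e : R) (f : R -> R) : Prop :=
  forall B : set R, measurable B ->
    P (X @^-1` B) =
    ((1 - e)%:E * (@lebesgue_measure R) (B `&` `]0%R, 1%R[) + e%:E * dens_meas f B)%E.

(* order statistics: pi_(k) = k-th smallest (k >= 1) of x_0..x_{n-1} *)
Definition order_stat {R : realType} (n : nat) (x : 'I_n -> R) (k : nat) : R :=
  nth 0 (sort (fun a b : R => a <= b) [seq x i | i <- enum 'I_n]) k.-1.

Definition HC_star {R : realType} (gamma0 : R) (n : nat) (x : 'I_n -> R) : \bar R :=
  (\big[maxe/-oo]_(1 <= k < n.+1 | (k%:R <= gamma0 * n%:R)%R)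
     (Num.sqrt n%:R * (k%:R / n%:R - order_stat x k)
        / Num.sqrt (order_stat x k * (1 - order_stat x k)))%R%:E)%E.

From HB Require Import structures.
From mathcomp Require Import all_boot all_order all_algebra.
From mathcomp Require Import all_classical all_reals all_analysis.
From mathcomp Require Import ring lra measurable_realfun.
Set Implicit Arguments. Unset Strict Implicit. Unset Printing Implicit Defensive.
Import Order.TTheory GRing.Theory Num.Theory.
Import numFieldNormedType.Exports.
Local Open Scope classical_set_scope.
Local Open Scope ring_scope.

(* We prove the stronger fact that for beta > 1/2 no event depending on the
   sample only through finitely many interval cells separates H_0 from H_1,
   and that the HC rejection event is such an event.
   1. Chi-square bound on finite product spaces: independent mixtures
      (1 - e) p + e g_i with g_i <= C p move the probability of any event by
      at most t + ((1 + e^2 C)^n - 1) / t, for every t > 0.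
   2. HC cells: every HC score (k/n - t) / sqrt(t (1 - t)) is nonincreasing
      in t, so the line splits into at most n + 4 intervals such that the event
      {h < HC_n} only depends on the vector of cells of the sample.
   3. Measure theory: the cell vector of an independent sample has the product
      law of the cell probabilities, namely the uniform masses p under H_0 and
      the mixtures (1 - e) p + e g_i under H_1, where g_i <= C p because the
      densities are bounded by C.
   4. Asymptotics: for e = n^-beta, (1 + e^2 C)^n - 1 <= exp (C n^(1 - 2 beta)) - 1
      tends to 0, and a suitable choice of t concludes. *)

(* |x| <= t + x^2/t for every t > 0 (the arithmetic-geometric mean inequality
   with a free parameter); it turns a second moment into a first-moment bound. *)
Lemma abs_le_add_sqr_div (R : realFieldType) (x t : R) :
  0 < t -> `|x| <= t + x ^+ 2 / t.
Proof.
move=> t_gt0; have [x_le|x_gt] := leP `|x| t.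
  by rewrite -[X in X <= _]addr0 lerD // divr_ge0 ?sqr_ge0 // ltW.
rewrite -[X in X <= _]add0r; apply: lerD; first exact: ltW.
by rewrite ler_pdivlMr // -real_normK ?num_real // expr2 ler_wpM2l // ltW.
Qed.

Section ChiSquareBound.
Variables (R : realFieldType) (I : finType) (w L : I -> R).
Hypotheses (w_ge0 : forall s, 0 <= w s) (w_sum1 : \sum_s w s = 1)
  (wL_sum1 : \sum_s w s * L s = 1).

Lemma chi_square_event_bound (S : pred I) (t : R) : 0 < t ->
  `| \sum_(s | S s) w s * (L s - 1) | <= t + (\sum_s w s * L s ^+ 2 - 1) / t.
Proof.
move=> t_gt0.
have var_eq : \sum_s w s * (L s - 1) ^+ 2 = \sum_s w s * L s ^+ 2 - 1.
  have -> : \sum_s w s * (L s - 1) ^+ 2 =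
      \sum_s w s * L s ^+ 2 - 2 * \sum_s w s * L s + \sum_s w s.
    rewrite mulr_sumr -sumrB -big_split /=; apply: eq_bigr => s _; ring.
  by rewrite wL_sum1 w_sum1; ring.
apply: (le_trans (ler_norm_sum _ _ _)).
apply: (@le_trans _ _ (\sum_s w s * (t + (L s - 1) ^+ 2 / t))).
  rewrite [X in _ <= X](bigID S) /= -[X in X <= _]addr0.
  apply: lerD; last first.
    apply: sumr_ge0 => s _; apply: mulr_ge0 => //.
    by rewrite addr_ge0 ?divr_ge0 ?sqr_ge0 ?ltW.
  apply: ler_sum => s _; rewrite normrM ger0_norm // ler_wpM2l //.
  exact: abs_le_add_sqr_div.
under eq_bigr => s _ do rewrite mulrDr mulrA.
by rewrite big_split /= -mulr_suml -mulr_suml w_sum1 mul1r var_eq.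
Qed.

End ChiSquareBound.

(* Product likelihood ratios: for independent coordinates with common
   reference law p and coordinatewise likelihood ratios a i, the second moments
   multiply, so the chi-square bound above becomes V^n - 1. *)
Section ProductBound.
Variables (R : realFieldType) (n m : nat) (p : 'I_m -> R) (a : 'I_n -> 'I_m -> R)
  (V : R).
Hypotheses (p_ge0 : forall c, 0 <= p c) (p_sum1 : \sum_c p c = 1)
  (a_mean1 : forall i, \sum_c p c * a i c = 1)
  (a_moment2 : forall i, \sum_c p c * a i c ^+ 2 <= V).

Lemma product_event_bound (S : pred {ffun 'I_n -> 'I_m}) (t : R) : 0 < t ->
  `| \sum_(s | S s) \prod_i (p (s i) * a i (s i)) - \sum_(s | S s) \prod_i p (s i) |
    <= t + (V ^+ n - 1) / t.
Proof.
move=> t_gt0.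
pose w (s : {ffun 'I_n -> 'I_m}) := \prod_i p (s i).
pose L (s : {ffun 'I_n -> 'I_m}) := \prod_i a i (s i).
have prod_sum (F : 'I_n -> 'I_m -> R) :
    \sum_(s : {ffun 'I_n -> 'I_m}) \prod_i F i (s i) = \prod_i \sum_c F i c.
  by rewrite (bigA_distr_bigA F).
have w_sum1 : \sum_s w s = 1 by rewrite /w (prod_sum (fun _ c => p c)) big1.
have wL_sum1 : \sum_s w s * L s = 1.
  rewrite /w /L; under eq_bigr => s _ do rewrite -big_split /=.
  by rewrite (prod_sum (fun i c => p c * a i c)) big1.
have wL2_le : \sum_s w s * L s ^+ 2 <= V ^+ n.
  rewrite /w /L; under eq_bigr => s _ do rewrite -prodrXl -big_split /=.
  rewrite (prod_sum (fun i c => p c * a i c ^+ 2)) -[n in V ^+ n]card_ord -prodr_const.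
  apply: ler_prod => i _; rewrite a_moment2 andbT.
  by apply: sumr_ge0 => c _; rewrite mulr_ge0 ?sqr_ge0.
have -> : \sum_(s | S s) \prod_i (p (s i) * a i (s i)) - \sum_(s | S s) w s =
    \sum_(s | S s) w s * (L s - 1).
  by rewrite -sumrB; apply: eq_bigr => s _; rewrite big_split /= mulrBr mulr1.
have w_ge0 s : 0 <= w s by apply: prodr_ge0 => i _.
apply: (le_trans (chi_square_event_bound w_ge0 w_sum1 wL_sum1 S t_gt0)).
rewrite lerD2l; apply: ler_wpM2r; first by rewrite invr_ge0 ltW.
by rewrite lerD2r.
Qed.

End ProductBound.

Definition mixture_ratio (R : realFieldType) (m : nat) (e : R) (p g : 'I_m -> R)
  (c : 'I_m) : R := (1 - e) + e * (g c / p c).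

Section MixtureRatio.
Variables (R : realFieldType) (m : nat) (p g : 'I_m -> R) (e C : R).
Hypotheses (p_ge0 : forall c, 0 <= p c) (p_sum1 : \sum_c p c = 1)
  (g_ge0 : forall c, 0 <= g c) (g_sum1 : \sum_c g c = 1)
  (g_le : forall c, g c <= C * p c).

(* g is absolutely continuous w.r.t. p, so g = p * (g / p). *)
Lemma density_factor c : g c = p c * (g c / p c).
Proof.
have [p0|p_neq0] := eqVneq (p c) 0; last by rewrite mulrC divfK.
by apply/eqP; rewrite p0 mul0r eq_le g_ge0 andbT; have := g_le c; rewrite p0 mulr0.
Qed.

Lemma mixture_ratioE c : (1 - e) * p c + e * g c = p c * mixture_ratio e p g c.
Proof. by rewrite /mixture_ratio {1}density_factor; ring. Qed.

Lemma mixture_ratio_mean : \sum_c p c * mixture_ratio e p g c = 1.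
Proof.
under eq_bigr => c _ do rewrite -mixture_ratioE.
by rewrite big_split /= -!mulr_sumr p_sum1 g_sum1; ring.
Qed.

(* The second moment exceeds 1 by at most e^2 C: the cross term is exactly
   linear in e, and E_p[(g/p)^2] <= C because g <= C p. *)
Lemma mixture_ratio_moment2 :
  \sum_c p c * mixture_ratio e p g c ^+ 2 <= 1 + e ^+ 2 * C.
Proof.
pose r c := g c / p c.
have sum_pr : \sum_c p c * r c = 1.
  by rewrite -g_sum1; apply: eq_bigr => c _; rewrite -density_factor.
have sum_pr2 : \sum_c p c * r c ^+ 2 <= C.
  rewrite -[C]mulr1 -sum_pr mulr_sumr; apply: ler_sum => c _.
  have [p0|p_neq0] := eqVneq (p c) 0; first by rewrite p0 !(mul0r, mulr0).
  rewrite expr2 mulrA [C * _]mulrC -density_factor ler_wpM2l //.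
  by rewrite ler_pdivrMr ?g_le // lt_def p_neq0 p_ge0.
have -> : \sum_c p c * mixture_ratio e p g c ^+ 2 = (1 - e) ^+ 2 * \sum_c p c
    + 2 * e * (1 - e) * \sum_c p c * r c + e ^+ 2 * \sum_c p c * r c ^+ 2.
  rewrite !mulr_sumr -!big_split /=; apply: eq_bigr => c _.
  by rewrite /mixture_ratio -/(r c); ring.
rewrite p_sum1 sum_pr !mulr1.
have : e ^+ 2 * \sum_c p c * r c ^+ 2 <= e ^+ 2 * C by rewrite ler_wpM2l ?sqr_ge0.
have -> : (1 - e) ^+ 2 + 2 * e * (1 - e) = 1 - e ^+ 2 by ring.
have := sqr_ge0 e; lra.
Qed.

End MixtureRatio.

Lemma mixture_event_bound (R : realFieldType) (n m : nat) (p : 'I_m -> R)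
    (g : 'I_n -> 'I_m -> R) (e C t : R) (S : pred {ffun 'I_n -> 'I_m}) :
  0 < t -> (forall c, 0 <= p c) -> \sum_c p c = 1 ->
  (forall i c, 0 <= g i c) -> (forall i, \sum_c g i c = 1) ->
  (forall i c, g i c <= C * p c) ->
  `| \sum_(s | S s) \prod_i ((1 - e) * p (s i) + e * g i (s i))
     - \sum_(s | S s) \prod_i p (s i) | <= t + ((1 + e ^+ 2 * C) ^+ n - 1) / t.
Proof.
move=> t_gt0 p_ge0 p_sum1 g_ge0 g_sum1 g_le.
pose a i := mixture_ratio e p (g i).
have mean i : \sum_c p c * a i c = 1 by exact: mixture_ratio_mean (g_le i).
have moment2 i : \sum_c p c * a i c ^+ 2 <= 1 + e ^+ 2 * C.
  exact: mixture_ratio_moment2.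
under eq_bigr => s _ do
  under eq_bigr => i _ do rewrite (mixture_ratioE e (g_ge0 i) (g_le i)).
exact: (product_event_bound p_ge0 p_sum1 mean moment2).
Qed.

Definition hc_score (R : realType) (n k : nat) (t : R) : R :=
  Num.sqrt n%:R * (k%:R / n%:R - t) / Num.sqrt (t * (1 - t)).

(* Outside (0,1) the normalizing square root vanishes and so does the score. *)
Lemma hc_score_out (R : realType) (n k : nat) (t : R) :
  t <= 0 \/ 1 <= t -> hc_score n k t = 0.
Proof.
move=> t_out; rewrite /hc_score.
suff -> : Num.sqrt (t * (1 - t)) = 0 by rewrite invr0 mulr0.
apply: ler0_sqrtr; case: t_out => t_out.
  by rewrite mulr_le0_ge0 //; lra.
by rewrite mulr_ge0_le0 //; lra.
Qed.

Lemma hc_score_antitone (R : realType) (n k : nat) (t t' : R) :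
  (k <= n)%N -> 0 < t -> t <= t' -> t' < 1 -> hc_score n k t' <= hc_score n k t.
Proof.
move=> k_le t_gt0 tt' t'_lt1.
rewrite /hc_score; set a := k%:R / n%:R.
have a_ge0 : 0 <= a by rewrite /a divr_ge0.
have a_le1 : a <= 1.
  rewrite /a; have [->|n_neq0] := eqVneq n 0%N; first by rewrite invr0 mulr0.
  by rewrite ler_pdivrMr ?mul1r ?ler_nat // ltr0n lt0n.
rewrite -!mulrA ler_wpM2l ?sqrtr_ge0 //.
set u := Num.sqrt t; set v := Num.sqrt (1 - t).
set u' := Num.sqrt t'; set v' := Num.sqrt (1 - t').
have t'_gt0 : 0 < t' by lra.
have u_gt0 : 0 < u by rewrite sqrtr_gt0.
have u'_gt0 : 0 < u' by rewrite sqrtr_gt0.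
have v_gt0 : 0 < v by rewrite sqrtr_gt0; lra.
have v'_gt0 : 0 < v' by rewrite sqrtr_gt0; lra.
have u_le : u <= u' by rewrite ler_sqrt //; lra.
have v_le : v' <= v by rewrite ler_sqrt //; lra.
have tE : t = u ^+ 2 by rewrite sqr_sqrtr // ltW.
have t'E : t' = u' ^+ 2 by rewrite sqr_sqrtr // ltW.
have one_tE : 1 - t = v ^+ 2 by rewrite sqr_sqrtr //; lra.
have one_t'E : 1 - t' = v' ^+ 2 by rewrite sqr_sqrtr //; lra.
rewrite (sqrtrM (1 - t) (ltW t_gt0)) (sqrtrM (1 - t') (ltW t'_gt0)).
rewrite -/u -/v -/u' -/v'.
have uv_gt0 : 0 < u * v by rewrite mulr_gt0.
have uv'_gt0 : 0 < u' * v' by rewrite mulr_gt0.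
rewrite ler_pdivrMr // mulrAC ler_pdivlMr //.
have cross1 : v' * u <= v * u' by rewrite ler_pM // ltW.
have cross2 : u * v' <= u' * v by rewrite ler_pM // ltW.
have num_t'E : a - t' = a * v' ^+ 2 - (1 - a) * u' ^+ 2 by rewrite -one_t'E -t'E; ring.
have num_tE : a - t = a * v ^+ 2 - (1 - a) * u ^+ 2 by rewrite -one_tE -tE; ring.
rewrite num_t'E num_tE.
have cross1_term : a * v * v' * (v' * u - v * u') <= 0.
  by rewrite mulr_ge0_le0 ?subr_le0 // !mulr_ge0 // ltW.
have cross2_term : 0 <= (1 - a) * u * u' * (u' * v - u * v').
  by rewrite !mulr_ge0 ?subr_ge0 // ?ltW //; lra.
nra.
Qed.

(* Cells of the real line adapted to HC at level h: the cell of t records how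
   many of the n + 1 scores (k = 0..n) are <= h at t.  Because every score is
   nonincreasing on (0,1), these sets grow with t, so cells are intervals and
   each comparison "h < score k" is constant on each cell. *)
Section HCCells.
Variables (R : realType) (n : nat) (h : R).

Definition low_scores (t : R) : {set 'I_n.+1} :=
  [set k : 'I_n.+1 | ~~ (h < hc_score n k t)].

Definition hc_cell (t : R) : nat :=
  if t <= 0 then 0 else if 1 <= t then n.+3 else #|low_scores t|.+1.

Lemma hc_cell_lt t : (hc_cell t < n.+4)%N.
Proof.
rewrite /hc_cell; case: ifP => // _; case: ifP => // _.
by rewrite !ltnS (leq_trans (max_card _)) ?card_ord.
Qed.

Lemma low_scores_mono t t' : 0 < t -> t <= t' -> t' < 1 ->
  low_scores t \subset low_scores t'.
Proof.
move=> t0 tt t1; apply/fintype.subsetP => k; rewrite !inE -!leNgt => hk.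
by apply: le_trans hk; apply: hc_score_antitone => //; rewrite -ltnS.
Qed.

Lemma hc_cell_mono t t' : t <= t' -> (hc_cell t <= hc_cell t')%N.
Proof.
move=> tt; rewrite /hc_cell.
have [//|t0] := leP t 0; have [t'0|t'0] := leP t' 0; first by lra.
have [t'1|t'1] := leP 1 t'; have [t1|t1] := leP 1 t => //.
- by rewrite !ltnS (leq_trans (max_card _)) ?card_ord.
- by lra.
- by rewrite ltnS subset_leq_card // low_scores_mono.
Qed.

Lemma hc_cell_fiber t t' : hc_cell t = hc_cell t' -> forall k : 'I_n.+1,
  (h < hc_score n k t) = (h < hc_score n k t').
Proof.
wlog tt : t t' / t <= t'.
  move=> wlog_le same k; have [le_tt'|/ltW le_t't] := leP t t'; first exact: wlog_le.
  by symmetry; apply: wlog_le.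
rewrite /hc_cell => + k.
have [t0|t0] := leP t 0.
  have [t'0|t'0] := leP t' 0; first by rewrite !hc_score_out //; left.
  by case: (leP 1 t').
have [t'0|t'0] := leP t' 0; first by lra.
have [t1|t1] := leP 1 t.
  have [t'1|t'1] := leP 1 t'; first by rewrite !hc_score_out //; right.
  by lra.
have [t'1|t'1] := leP 1 t'.
  move=> [] same_card; have := max_card (low_scores t).
  by rewrite same_card card_ord ltnn.
move=> [] /subset_cardP /(_ (low_scores_mono t0 tt t'1)) same_set.
by have := same_set k; rewrite !inE => /negb_inj.
Qed.

(* A nondecreasing index has intervals as level sets; cells are Borel. *)
Lemma hc_cell_interval (j : nat) : is_interval [set t | hc_cell t = j].
Proof.
move=> s t /= sj tj z /andP[sz zt]; apply/eqP; rewrite eqn_leq.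
by rewrite -{1}tj -sj !hc_cell_mono.
Qed.

End HCCells.

(* The HC statistic only depends on the cells of the observations: sorting
   commutes with the monotone cell map, so equal cell vectors give equal cells
   for every order statistic, hence equal outcomes of every comparison h < score. *)
Section HCCellInvariance.
Variables (R : realType) (n : nat) (h gamma0 : R).
Local Notation hc_cell := (@hc_cell R n h).

Lemma sort_hc_cell (s : seq R) :
  map hc_cell (sort (fun a b : R => a <= b) s) = sort leq (map hc_cell s).
Proof.
apply: (sorted_eq leq_trans anti_leq).
- rewrite sorted_map; apply: sub_sorted (sort_sorted le_total s).
  by move=> a b /= ab; exact: hc_cell_mono.
- exact/sort_sorted/leq_total.
- apply: perm_trans (perm_map hc_cell (permEl (perm_sort _ s))) _.
  by rewrite perm_sym; apply: permEl; exact: perm_sort.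
Qed.

Lemma hc_cell_order_stat (x y : 'I_n -> R) k :
  (forall i, hc_cell (x i) = hc_cell (y i)) -> (0 < k <= n)%N ->
  hc_cell (order_stat x k) = hc_cell (order_stat y k).
Proof.
move=> same /andP[k_gt0 k_le]; rewrite /order_stat.
have sz (z : 'I_n -> R) :
    (k.-1 < size (sort (fun a b : R => (a <= b)%R) [seq z i | i <- enum 'I_n]))%N.
  by rewrite size_sort size_map size_enum_ord prednK.
rewrite -(nth_map 0 (hc_cell 0) hc_cell (sz x)) -(nth_map 0 (hc_cell 0) hc_cell (sz y)).
by rewrite !sort_hc_cell -!map_comp (eq_map (same : hc_cell \o x =1 hc_cell \o y)).
Qed.

Lemma HC_cell_invariant (x y : 'I_n -> R) :
  (forall i, hc_cell (x i) = hc_cell (y i)) ->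
  (h%:E < HC_star gamma0 y)%E -> (h%:E < HC_star gamma0 x)%E.
Proof.
move=> same; rewrite !ltNge; apply: contra => HCx_le.
rewrite /HC_star big_seq_cond; apply: bigmax_le => [|k /andP[k_range Pk]].
  exact: leNye.
have k_in := k_range; move: k_range; rewrite mem_index_iota => /andP[k_gt0 k_lt].
have same_k : hc_cell (order_stat x k) = hc_cell (order_stat y k).
  by apply: hc_cell_order_stat => //; rewrite k_gt0 -ltnS.
have := hc_cell_fiber same_k (Ordinal k_lt); rewrite /hc_score /= => same_cmp.
rewrite lee_fin leNgt -same_cmp -leNgt -lee_fin.
by apply: le_trans HCx_le; apply: le_bigmax_seq.
Qed.

End HCCellInvariance.

Section FinitePartition.
Context d (T : measurableType d) (R : realType) (mu : {measure set T -> \bar R}).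
Context (I : finType) (V : T -> I) (mV : forall i, measurable [set w | V w = i]).

Let patternE (Q : pred I) :
  [set w | Q (V w)] = \bigcup_(i in [set i | Q i]) [set w | V w = i].
Proof. by apply/seteqP; split => [w Qw|w [i Qi /= ->]] //; exists (V w). Qed.

Lemma measurable_pattern (Q : pred I) : measurable [set w | Q (V w)].
Proof.
by rewrite patternE; apply: fin_bigcup_measurable => //; exact: finite_finset.
Qed.

Lemma measure_pattern (Q : pred I) :
  mu [set w | Q (V w)] = (\sum_(i | Q i) mu [set w | V w = i])%E.
Proof.
rewrite patternE measure_fin_bigcup //; last 2 first.
- exact: finite_finset.
- by move=> i j _ _ [w [/= Vi Vj]]; rewrite -Vi -Vj.
rewrite (fsbigE (enum Q)) ?enum_uniq //; last 2 first.
- by move=> i /=; rewrite mem_enum.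
- by move=> i /= Qi /negP[]; rewrite mem_enum.
rewrite big_enum_cond /=; apply: eq_bigl => i.
by apply/andP/idP => [[]|Qi] //; split; last exact: mem_set.
Qed.

End FinitePartition.

Section CellPattern.
Context d (T : measurableType d) (R : realType) (n m : nat).
Context (c : R -> 'I_m) (mc : forall j, measurable [set t | c t = j]).
Context (X : 'I_n -> T -> R) (mX : forall i, measurable_fun setT (X i)).

Definition cell_pattern (w : T) : {ffun 'I_n -> 'I_m} := [ffun i => c (X i w)].

Lemma cell_patternE (s : {ffun 'I_n -> 'I_m}) :
  [set w | cell_pattern w = s] =
  \bigcap_(i in [set: 'I_n]) X i @^-1` [set t | c t = s i].
Proof.
apply/seteqP; split => w /=; first by move=> <- i _ /=; rewrite ffunE.
by move=> same; apply/ffunP => i; rewrite ffunE; apply: same.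
Qed.

Lemma measurable_cell_pattern (s : {ffun 'I_n -> 'I_m}) :
  measurable [set w | cell_pattern w = s].
Proof.
rewrite cell_patternE; apply: fin_bigcap_measurable => [|i _].
  exact: finite_finset.
by rewrite -[X i @^-1` _]setTI; apply: mX.
Qed.

Lemma cell_event_prob (P : probability T R) (indep : mutually_independent P X)
    (Q : pred {ffun 'I_n -> 'I_m}) :
  P [set w | Q (cell_pattern w)] =
  (\sum_(s | Q s) \prod_(i < n) P (X i @^-1` [set t | c t = s i]))%E.
Proof.
rewrite (measure_pattern P measurable_cell_pattern); apply: eq_bigr => s _.
by rewrite cell_patternE; apply: indep.
Qed.

End CellPattern.

Definition unif_mass (R : realType) (B : set R) : R :=
  fine (@lebesgue_measure R (B `&` `]0, 1[)).

Lemma unif_massE (R : realType) (B : set R) : measurable B ->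
  @lebesgue_measure R (B `&` `]0, 1[) = (unif_mass B)%:E.
Proof.
move=> mB; rewrite fineK // ge0_fin_numE ?measure_ge0 //.
apply: (@le_lt_trans _ _ (@lebesgue_measure R (`]0, 1[ : set R))); last first.
  by rewrite lebesgue_measure_itv /= lte01 oppr0 adde0 ltry.
apply: le_measure; rewrite ?inE; last exact: subIsetr.
- exact: measurableI.
- exact: measurable_itv.
Qed.

Section DensityMass.
Variables (R : realType) (f : R -> R) (C : R).
Hypotheses (f_ge0 : forall x, 0 <= f x) (f_cont : {within `]0, 1[, continuous f})
  (f_le : forall x, 0 < x < 1 -> f x <= C).

Lemma dens_meas_le (B : set R) : measurable B ->
  (dens_meas f B <= C%:E * @lebesgue_measure R (B `&` `]0%R, 1%R[))%E.
Proof.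
move=> mB; have mBI : measurable (B `&` `]0, 1[) by exact: measurableI.
have mf : measurable_fun (`]0, 1[ : set R) f.
  by apply: subspace_continuous_measurable_fun => //; exact: measurable_itv.
rewrite /dens_meas -integral_cst //; apply: ge0_le_integral => //.
- by move=> x _; rewrite lee_fin.
- by apply/measurable_EFinP; apply: measurable_funS mf.
- by move=> x [_ /=]; rewrite in_itv /= => x01; rewrite lee_fin f_le.
Qed.

Definition dens_mass (B : set R) : R := fine (dens_meas f B).

Lemma dens_massE (B : set R) : measurable B -> dens_meas f B = (dens_mass B)%:E.
Proof.
move=> mB; rewrite fineK // ge0_fin_numE; last first.
  by apply: integral_ge0 => x _; rewrite lee_fin.
by apply: le_lt_trans (dens_meas_le mB) _; rewrite unif_massE // -EFinM ltry.
Qed.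

End DensityMass.

Lemma cell_probs_sum1 d (T : measurableType d) (R : realType) (P : probability T R)
    (m : nat) (c : R -> 'I_m) (mc : forall j, measurable [set t | c t = j])
    (X : T -> R) (mX : measurable_fun setT X) :
  (\sum_j P (X @^-1` [set t | c t = j]))%E = 1%E.
Proof.
have mcX j : measurable [set w | c (X w) = j].
  by rewrite -[X in measurable X]setTI; exact: (mX measurableT _ (mc j)).
rewrite -(probability_setT P) (_ : setT = [set w | xpredT (c (X w))]).
  by rewrite (measure_pattern P mcX xpredT).
by apply/seteqP.
Qed.

Section HCErrors.
Variables (R : realType) (n : nat) (e gamma0 C h : R) (f : 'I_n -> R -> R).
Context d0 (T0 : measurableType d0) (P0 : probability T0 R) (X0 : 'I_n -> T0 -> R).
Context d1 (T1 : measurableType d1) (P1 : probability T1 R) (X1 : 'I_n -> T1 -> R).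
Hypotheses (n_gt0 : (0 < n)%N) (e_gt0 : 0 < e).
Hypotheses (f_ge0 : forall i x, 0 <= f i x)
  (f_cont : forall i, {within `]0, 1[, continuous (f i)})
  (f_le : forall i x, 0 < x < 1 -> f i x <= C).
Hypotheses (mX0 : forall i, measurable_fun setT (X0 i))
  (indep0 : mutually_independent P0 X0) (law0 : forall i, uniform01_law P0 (X0 i)).
Hypotheses (mX1 : forall i, measurable_fun setT (X1 i))
  (indep1 : mutually_independent P1 X1)
  (law1 : forall i, mixture_law P1 (X1 i) e (f i)).

Let cell (t : R) : 'I_n.+4 := inord (hc_cell n h t).
Let J (j : 'I_n.+4) : set R := [set t | cell t = j].
Let p0 (j : 'I_n.+4) : R := unif_mass (J j).
Let g (i : 'I_n) (j : 'I_n.+4) : R := dens_mass (f i) (J j).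

Let measurable_J j : measurable (J j).
Proof.
have -> : J j = [set t | hc_cell n h t = j].
  apply/seteqP; split => t /=; first by move=> <-; rewrite inordK // hc_cell_lt.
  by move=> tj; apply: val_inj; rewrite /= inordK // hc_cell_lt.
apply: is_interval_measurable; exact: (@hc_cell_interval R n h j).
Qed.

Definition HC_exceeds (s : {ffun 'I_n -> 'I_n.+4}) : bool :=
  `[< exists y : 'I_n -> R,
        (forall i, cell (y i) = s i) /\ (h%:E < HC_star gamma0 y)%E >].

Let HC_eventE d (T : measurableType d) (X : 'I_n -> T -> R) :
  [set w | (h%:E < HC_star gamma0 (fun i => X i w))%E] =
  [set w | HC_exceeds (cell_pattern cell X w)].
Proof.
apply/seteqP; split => w /= HCw.
  by apply/asboolP; exists (fun i => X i w); split => // i; rewrite ffunE.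
move/asboolP: HCw => [y [same_cell HCy]]; apply: HC_cell_invariant HCy => i.
by have := congr1 val (same_cell i); rewrite ffunE /cell /= !inordK ?hc_cell_lt.
Qed.

Let p0E j : lebesgue_measure (J j `&` `]0, 1[) = (p0 j)%:E.
Proof. exact: (unif_massE (measurable_J j)). Qed.

Let gE i j : dens_meas (f i) (J j) = (g i j)%:E.
Proof.
apply: (dens_massE (C := C)); [exact: f_ge0|exact: f_cont|exact: f_le|].
exact: measurable_J.
Qed.

Let P0E i j : P0 (X0 i @^-1` J j) = (p0 j)%:E.
Proof. by rewrite law0 // p0E. Qed.

Let P1E i j : P1 (X1 i @^-1` J j) = ((1 - e) * p0 j + e * g i j)%:E.
Proof. by rewrite law1 // p0E gE. Qed.

Let p0_sum1 : \sum_j p0 j = 1.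
Proof.
have := cell_probs_sum1 P0 measurable_J (mX0 (Ordinal n_gt0)).
by under eq_bigr do rewrite P0E; rewrite sumEFin => -[].
Qed.

Let g_sum1 i : \sum_j g i j = 1.
Proof.
have := cell_probs_sum1 P1 measurable_J (mX1 i).
under eq_bigr do rewrite P1E; rewrite sumEFin => -[].
rewrite big_split /= -!mulr_sumr p0_sum1 => sum1.
by apply: (mulfI (lt0r_neq0 e_gt0)); lra.
Qed.

Let p0_ge0 j : 0 <= p0 j.
Proof. by rewrite -lee_fin -p0E measure_ge0. Qed.

Let g_ge0 i j : 0 <= g i j.
Proof. by rewrite -lee_fin -gE; apply: integral_ge0 => x _; rewrite lee_fin. Qed.

Let g_le i j : g i j <= C * p0 j.
Proof.
rewrite -lee_fin EFinM -gE -p0E.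
apply: dens_meas_le; [exact: f_ge0|exact: f_cont|exact: f_le|].
exact: measurable_J.
Qed.

Lemma HC_errors_sum : exists D : R,
  (P0 [set w | h%:E < HC_star gamma0 (fun i => X0 i w)]
   + P1 [set w | HC_star gamma0 (fun i => X1 i w) <= h%:E])%E = (1 + D)%:E /\
  forall t, 0 < t -> `|D| <= t + ((1 + e ^+ 2 * C) ^+ n - 1) / t.
Proof.
have prob0 : P0 [set w | (h%:E < HC_star gamma0 (fun i => X0 i w))%E] =
    (\sum_(s | HC_exceeds s) \prod_i p0 (s i))%:E.
  rewrite HC_eventE (cell_event_prob measurable_J mX0 indep0) -sumEFin.
  by apply: eq_bigr => s _; rewrite -prodEFin; apply: eq_bigr => i _; exact: P0E.
have prob1 : P1 [set w | (HC_star gamma0 (fun i => X1 i w) <= h%:E)%E] =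
    (1 - \sum_(s | HC_exceeds s) \prod_i ((1 - e) * p0 (s i) + e * g i (s i)))%:E.
  have -> : [set w | (HC_star gamma0 (fun i => X1 i w) <= h%:E)%E] =
      ~` [set w | (h%:E < HC_star gamma0 (fun i => X1 i w))%E].
    by apply/seteqP; split => w /=; rewrite leNgt => /negP.
  rewrite HC_eventE probability_setC; last first.
    by apply: measurable_pattern; exact: measurable_cell_pattern.
  rewrite (cell_event_prob measurable_J mX1 indep1) EFinB -sumEFin.
  congr (_ - _)%E; apply: eq_bigr => s _; rewrite -prodEFin.
  by apply: eq_bigr => i _; exact: P1E.
exists (\sum_(s | HC_exceeds s) \prod_i p0 (s i) -
    \sum_(s | HC_exceeds s) \prod_i ((1 - e) * p0 (s i) + e * g i (s i))).
split; first by rewrite prob0 prob1 -EFinD; congr EFin; ring.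
move=> t t_gt0; rewrite distrC.
exact: mixture_event_bound.
Qed.

End HCErrors.

(* exp y <= 1 + 2 y on [0, 1/2]: from exp(-y) >= 1 - y >= 1/2. *)
Lemma expR_sub1_le (R : realType) (y : R) : 0 <= y <= 1 / 2 -> expR y - 1 <= 2 * y.
Proof.
move=> /andP[y_ge0 y_le].
have expR_pos := expR_gt0 y.
have inv_ge : 1 - y <= (expR y)^-1 by rewrite -expRN; have := expR_ge1Dx (- y); lra.
have prod_le : (1 - y) * expR y <= 1.
  by have := ler_wpM2r (ltW expR_pos) inv_ge; rewrite mulVf ?gt_eqF.
have expR_le2 : expR y <= 2.
  have : 1 / 2 * expR y <= (1 - y) * expR y by apply: ler_wpM2r; [exact: ltW|lra].
  lra.
have : y * expR y <= y * 2 by rewrite ler_wpM2l.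
have : (1 - y) * expR y = expR y - y * expR y by ring.
lra.
Qed.

Lemma signal_energyE (R : realType) (beta : R) (n : nat) : (0 < n)%N ->
  n%:R * (n%:R `^ (- beta)) ^+ 2 = expR ((1 - 2 * beta) * ln (n%:R : R)).
Proof.
move=> n_gt0; have n_neq0 : (n%:R : R) != 0 by rewrite pnatr_eq0 -lt0n.
rewrite /powR (negbTE n_neq0) -expRM_natl -{1}(@lnK _ n%:R) ?posrE ?ltr0n //.
by rewrite -expRD; congr expR; ring.
Qed.

Lemma signal_energy_small (R : realType) (beta delta : R) :
  1 / 2 < beta -> 0 < delta ->
  \forall n \near \oo, n%:R * ((n%:R : R) `^ (- beta)) ^+ 2 <= delta.
Proof.
move=> beta_gt delta_gt0.
set K := ln delta / (1 - 2 * beta).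
near=> n.
have n_gt0 : (0 < n)%N by near: n; exact: nbhs_infty_gt.
have K_le : expR K <= n%:R by near: n; exact: nbhs_infty_ger.
have K_le_ln : K <= ln (n%:R : R).
  by rewrite -[X in X <= _]expRK ler_ln ?posrE ?expR_gt0 ?ltr0n.
rewrite signal_energyE // -[X in _ <= X](@lnK _ delta) ?posrE // ler_expR.
have -> : ln delta = (1 - 2 * beta) * K.
  by rewrite /K mulrC divfK // ltr0_neq0 //; lra.
by rewrite ler_wnM2l //; lra.
Unshelve. all: by end_near.
Qed.

Lemma chi_square_small (R : realType) (beta C eta : R) :
  1 / 2 < beta -> 0 <= C -> 0 < eta ->
  \forall n \near \oo, (1 + ((n%:R : R) `^ (- beta)) ^+ 2 * C) ^+ n - 1 <= eta.
Proof.
move=> beta_gt C_ge0 eta_gt0.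
set M := Num.min (1 / 2) (eta / 2).
have M_gt0 : 0 < M by rewrite lt_min; apply/andP; split; lra.
have delta_gt0 : 0 < M / (C + 1) by rewrite divr_gt0 //; lra.
near=> n.
have energy : n%:R * ((n%:R : R) `^ (- beta)) ^+ 2 <= M / (C + 1).
  by near: n; exact: signal_energy_small.
set e := (n%:R : R) `^ (- beta); set y := n%:R * e ^+ 2 * C.
have y_ge0 : 0 <= y by rewrite mulr_ge0 // mulr_ge0 // sqr_ge0.
have y_le : y <= M.
  apply: (le_trans (ler_wpM2r C_ge0 energy)).
  rewrite mulrAC ler_pdivrMr; last by lra.
  by rewrite mulrDr mulr1 lerDl ltW.
move: y_le; rewrite le_min => /andP[y_le_half y_le_eta].
have : (1 + e ^+ 2 * C) ^+ n <= expR y.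
  rewrite /y -mulrA expRM_natl; apply: lerXn2r.
  - by rewrite nnegrE addr_ge0 // mulr_ge0 // sqr_ge0.
  - by rewrite nnegrE expR_ge0.
  - exact: expR_ge1Dx.
have y_small : 0 <= y <= 1 / 2 by rewrite y_ge0 y_le_half.
have := expR_sub1_le y_small.
lra.
Unshelve. all: by end_near.
Qed.

(* The limit step: if the error sum is 1 + D_n with |D_n| <= t + c_n / t for
   every t > 0, and c_n -> 0, then the error sum tends to 1 (take t = eta / 2). *)
Lemma error_sum_cvg1 (R : realType) (u : nat -> \bar R) (c : nat -> R) :
  (\forall n \near \oo, exists D : R,
     u n = (1 + D)%:E /\ forall t, 0 < t -> `|D| <= t + c n / t) ->
  (forall eta, 0 < eta -> \forall n \near \oo, c n <= eta) ->
  u @ \oo --> 1%E.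
Proof.
move=> u_near c_small.
apply: cvg_EFin; first by apply: filterS u_near => n [D [-> _]].
apply/cvgrPdist_le => eta eta_gt0.
have eta2_gt0 : 0 < eta ^+ 2 / 4 by rewrite divr_gt0 // exprn_gt0.
apply: filterS2 u_near (c_small _ eta2_gt0) => n [D [uE D_le]] c_le.
rewrite /= uE /= opprD addrA subrr add0r normrN.
have eta_half_gt0 : 0 < eta / 2 by rewrite divr_gt0.
apply: (le_trans (D_le _ eta_half_gt0)).
have : c n / (eta / 2) <= eta / 2.
  by rewrite ler_pdivrMr //; apply: (le_trans c_le); rewrite expr2; lra.
lra.
Qed.

Theorem theorem1 (R : realType)
  (beta r gamma0 C : R) (alpha : R -> R -> R) (delta : nat -> R)
  (f : forall n : nat, 'I_n -> R -> R)
  (d0 : nat -> measure_display) (T0 : forall n, measurableType (d0 n))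
  (P0 : forall n, probability (T0 n) R) (X0 : forall n, 'I_n -> T0 n -> R)
  (d1 : nat -> measure_display) (T1 : forall n, measurableType (d1 n))
  (P1 : forall n, probability (T1 n) R) (X1 : forall n, 'I_n -> T1 n -> R)
  (h : nat -> R) :
  1 / 2 < beta < 1 -> 0 < r -> 0 < gamma0 < 1 ->
  (* alpha : [0,1] x (0,oo) -> [0,oo), continuous, nondecreasing in q,
     nonincreasing in r *)
  {within [set p : R * R | 0 <= p.1 <= 1 /\ 0 < p.2],
     continuous (fun p : R * R => alpha p.1 p.2)} ->
  (forall q s, 0 <= q <= 1 -> 0 < s -> 0 <= alpha q s) ->
  (forall q q' s, 0 <= q <= q' -> q' <= 1 -> 0 < s -> alpha q s <= alpha q' s) ->
  (forall q s s', 0 <= q <= 1 -> 0 < s <= s' -> alpha q s' <= alpha q s) ->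
  (* each G_{n,i} has a continuous density f n i on (0,1), bounded by C,
     is a probability on (0,1), and is stochastically smaller than Unif(0,1) *)
  (forall n (i : 'I_n) x, 0 <= f n i x) ->
  (forall n (i : 'I_n), {within `]0, 1[, continuous (f n i)}) ->
  (forall n (i : 'I_n) x, 0 < x < 1 -> f n i x <= C) ->
  (forall n (i : 'I_n), dens_meas (f n i) setT = 1%E) ->
  (forall n (i : 'I_n) t, 0 < t < 1 -> t <= dens_cdf (f n i) t) ->
  (* tail condition (T) *)
  delta @ \oo --> 0 ->
  (forall n (i : 'I_n) q, 0 < q <= 1 ->
     0 < dens_cdf (f n i) (n%:R `^ (- q)) /\
     `| - ln (dens_cdf (f n i) (n%:R `^ (- q))) - alpha q r * ln n%:R |
       <= delta n * ln n%:R) ->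
  (* r < rho(beta), i.e. max_{q in (0,1]} ((1+q)/2 - alpha(q,r) - beta) < 0 *)
  sup [set (1 + q) / 2 - alpha q r - beta | q in `]0, 1]] < 0 ->
  (* H_0: pi_1..pi_n i.i.d. Unif(0,1) *)
  (forall n (i : 'I_n), measurable_fun setT (X0 n i)) ->
  (forall n, mutually_independent (P0 n) (X0 n)) ->
  (forall n (i : 'I_n), uniform01_law (P0 n) (X0 n i)) ->
  (* H_1^(n): independent, pi_i ~ (1 - eps_n) Unif(0,1) + eps_n G_{n,i},
     eps_n = n^(-beta) *)
  (forall n (i : 'I_n), measurable_fun setT (X1 n i)) ->
  (forall n, mutually_independent (P1 n) (X1 n)) ->
  (forall n (i : 'I_n), mixture_law (P1 n) (X1 n i) (n%:R `^ (- beta)) (f n i)) ->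
  ((P0 n [set w | (h n)%:E < HC_star gamma0 (fun i => X0 n i w)]
    + P1 n [set w | HC_star gamma0 (fun i => X1 n i w) <= (h n)%:E])%E
     @[n --> \oo] --> 1%E).
Proof.
move=> /andP[beta_gt _] _ _ _ _ _ _ f_ge0 f_cont f_le _ _ _ _ _.
move=> mX0 indep0 law0 mX1 indep1 law1.
have C_ge0 : 0 <= C.
  by apply: le_trans (f_ge0 1%N ord0 (1 / 2)) (f_le 1%N ord0 _ _); lra.
apply: (@error_sum_cvg1 _ _ (fun n => (1 + (n%:R `^ (- beta)) ^+ 2 * C) ^+ n - 1)).
  near=> n; have n_gt0 : (0 < n)%N by near: n; exact: nbhs_infty_gt.
  apply: HC_errors_sum => //; last exact: f_le.
  by rewrite powR_gt0 // ltr0n.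
by move=> eta eta_gt0; exact: chi_square_small.
Unshelve. all: by end_near.
Qed.
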